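(* A ring $R$ is a CUNC ring if and only if $R$ is an abelian CSNC ring.
   Context: All rings are associative with identity $1$. For a ring $R$, $\mathrm{Id}(R)$, $U(R)$, $\mathrm{Nil}(R)$ denote the sets of idempotents, units and nilpotent elements. An element $a\in R$ is clean if $a=e+u$ for some $e\in\mathrm{Id}(R)$, $u\in U(R)$. An element $a$ is strongly nil-clean if $a=e+q$ with $e\in \mathrm{Id}(R)$, $q\in\mathrm{Nil}(R)$ and $eq=qe$; $a$ is uniquely nil-clean if there is exactly one $e\in\mathrm{Id}(R)$ with $a-e\in\mathrm{Nil}(R)$. A ring $R$ is called CSNC if every clean element of $R$ is strongly nil-clean, and CUNC if every clean element of $R$ is uniquely nil-clean. $R$ is abelian if all its idempotents are central. *)

From mathcomp Require Import all_boot all_order all_algebra.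
Set Implicit Arguments. Unset Strict Implicit. Unset Printing Implicit Defensive.
Import GRing.Theory.
Local Open Scope ring_scope.

Definition idem (R : unitRingType) (e : R) : Prop := e * e = e.
Definition nilp (R : unitRingType) (q : R) : Prop := exists n : nat, q ^+ n = 0.

Definition clean_elt (R : unitRingType) (a : R) : Prop :=
  exists e u : R, idem e /\ u \is a GRing.unit /\ a = e + u.

Definition strongly_nil_clean (R : unitRingType) (a : R) : Prop :=
  exists e q : R, idem e /\ nilp q /\ e * q = q * e /\ a = e + q.

Definition uniquely_nil_clean (R : unitRingType) (a : R) : Prop :=
  exists e : R, (idem e /\ nilp (a - e)) /\
    forall f : R, idem f -> nilp (a - f) -> f = e.

Definition CSNC (R : unitRingType) : Prop :=
  forall a : R, clean_elt a -> strongly_nil_clean a.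

Definition CUNC (R : unitRingType) : Prop :=
  forall a : R, clean_elt a -> uniquely_nil_clean a.

Definition abelian_ring (R : unitRingType) : Prop :=
  forall e : R, idem e -> forall x : R, e * x = x * e.

From mathcomp Require Import all_boot all_order all_algebra.
Import GRing.Theory.
Set Implicit Arguments. Unset Strict Implicit.
Local Open Scope ring_scope.

(* Idempotents are clean, so in a CUNC ring an idempotent e is the only
   idempotent f with e - f nilpotent.  The idempotents e + e x (1 - e) and
   e + (1 - e) x e differ from e by square-zero elements, so both corners
   e x (1 - e) and (1 - e) x e vanish and e is central.  Conversely, if
   e + q = f + q' with e, f central idempotents, then e - f is nilpotent (a
   commuting sum of nilpotents) and satisfies (e - f)^3 = e - f, which forces
   e = f. *)

Section Nilpotents.

Variable R : unitRingType.
Implicit Types x y : R.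

Lemma expr_nil_ge x m k : x ^+ m = 0 -> (m <= k)%N -> x ^+ k = 0.
Proof. by move=> xm0 /subnKC <-; rewrite exprD xm0 mul0r. Qed.

Lemma nilp_sqr0 x : x * x = 0 -> nilp x.
Proof. by move=> xx0; exists 2%N; rewrite expr2. Qed.

Lemma nilpN x : nilp x -> nilp (- x).
Proof. by move=> [n xn0]; exists n; rewrite exprNn xn0 mulr0. Qed.

Lemma nilpD_comm x y : GRing.comm x y -> nilp x -> nilp y -> nilp (x + y).
Proof.
move=> cxy [m xm0] [k yk0]; exists (m + k)%N.
rewrite exprDn_comm //; apply: big1 => [[i /=]]; rewrite ltnS => le_i _.
case: (leqP k i) => [le_k_i | lt_i_k].
  by rewrite (expr_nil_ge yk0 le_k_i) mulr0 mul0rn.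
have le_m : (m <= m + k - i)%N by rewrite -addnBA ?leq_addr // ltnW.
by rewrite (expr_nil_ge xm0 le_m) mul0r mul0rn.
Qed.

Lemma nilp_tripotent_eq0 x : x ^+ 3 = x -> nilp x -> x = 0.
Proof.
move=> x3 [n xn0].
have x_odd k : x = x ^+ (2 * k).+1.
  elim: k => [|k IHk]; first by rewrite expr1.
  by rewrite mulnS !addSn add0n -addn3 exprD x3 -exprSr -IHk.
by rewrite (x_odd n) (expr_nil_ge xn0) // mul2n -addnn ltnW // ltnS leq_addr.
Qed.

End Nilpotents.

Section Idempotents.

Variable R : unitRingType.
Implicit Types e f x y : R.

Lemma idem_subr1 e : idem e -> idem (1 - e).
Proof. by move=> ee; rewrite /idem mulrBl mul1r mulrBr mulr1 ee subrr subr0. Qed.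

Lemma idem_reflection_unit e : idem e -> e *+ 2 - 1 \is a GRing.unit.
Proof.
move=> ee; apply/GRing.unitrP; exists (e *+ 2 - 1).
suff sqr1 : (e *+ 2 - 1) * (e *+ 2 - 1) = 1 by [].
rewrite mulrBl mulrBr !mul1r mulr1 mulrnAl mulrnAr ee -mulrnA opprB addrA.
by rewrite (_ : (2 * 2 = 2 + 2)%N) // mulrnDr addrK addrAC subrr add0r.
Qed.

Lemma clean_idem e : idem e -> clean_elt e.
Proof.
move=> ee; exists (1 - e), (e *+ 2 - 1); split; last split.
- exact: idem_subr1.
- exact: idem_reflection_unit.
- by rewrite mulr2n addrA addrC !addrA addrNK addNr add0r.
Qed.

Lemma idem_add_sqr0 e y : idem e -> e * y + y * e = y -> y * y = 0 -> idem (e + y).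
Proof.
by move=> ee eyye yy0; rewrite /idem mulrDl !mulrDr ee yy0 addr0 -addrA eyye.
Qed.

Lemma idem_sub_tripotent e f :
  idem e -> idem f -> e * f = f * e -> (e - f) ^+ 3 = e - f.
Proof.
move=> ee ff cef.
have efe : e * (e * f) = e * f by rewrite mulrA ee.
have fef : f * (e * f) = e * f by rewrite mulrA -cef -mulrA ff.
have sqr : (e - f) ^+ 2 = e + f - e * f - e * f.
  rewrite expr2 mulrBl !mulrBr ee ff -cef opprB.
  by rewrite addrAC -!addrA; congr (_ + _); rewrite addrC addrA.
rewrite exprS sqr mulrBl !mulrBr !mulrDr ee ff -cef fef efe.
by rewrite addrK (addrC _ f) addrK opprB addrA subrK.
Qed.

End Idempotents.

Section CleanRings.

Variable R : unitRingType.
Implicit Types a e f x y : R.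

Lemma CUNC_idem_unique e f : CUNC R -> idem e -> idem f -> nilp (e - f) -> f = e.
Proof.
move=> cunc ee ff nef; have [g [_ g_uniq]] := cunc e (clean_idem ee).
rewrite (g_uniq f ff nef); apply/esym/g_uniq => //.
by apply: nilp_sqr0; rewrite subrr mulr0.
Qed.

Lemma CUNC_idem_sqr0_eq0 e y :
  CUNC R -> idem e -> e * y + y * e = y -> y * y = 0 -> y = 0.
Proof.
move=> cunc ee eyye yy0; apply: (@addrI _ e); rewrite addr0.
apply: CUNC_idem_unique (idem_add_sqr0 ee eyye yy0) _ => //.
by rewrite opprD addrA subrr add0r; apply/nilpN/nilp_sqr0.
Qed.

Lemma CUNC_abelian : CUNC R -> abelian_ring R.
Proof.
move=> cunc e ee x.
have e_1e : e * (1 - e) = 0 by rewrite mulrBr mulr1 ee subrr.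
have e1_e : (1 - e) * e = 0 by rewrite mulrBl mul1r ee subrr.
have corner_r : e * x * (1 - e) = 0.
  set y := e * x * (1 - e).
  have ey : e * y = y by rewrite /y !mulrA ee.
  have ye : y * e = 0 by rewrite /y -mulrA e1_e mulr0.
  apply: (CUNC_idem_sqr0_eq0 cunc ee); rewrite ?ey ?ye ?addr0 //.
  by rewrite {2}/y !mulrA ye !mul0r.
have corner_l : (1 - e) * x * e = 0.
  set z := (1 - e) * x * e.
  have ez : e * z = 0 by rewrite /z !mulrA e_1e !mul0r.
  have ze : z * e = z by rewrite /z -mulrA ee.
  apply: (CUNC_idem_sqr0_eq0 cunc ee); rewrite ?ez ?ze ?add0r //.
  by rewrite -{1}ze -mulrA ez mulr0.
move/eqP: corner_r; rewrite mulrBr mulr1 subr_eq0 => /eqP ->.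
by move/eqP: corner_l; rewrite !mulrBl !mul1r subr_eq0 => /eqP ->.
Qed.

Lemma CUNC_CSNC : CUNC R -> CSNC R.
Proof.
move=> cunc a clean_a; have [e [[ee nq] _]] := cunc a clean_a.
exists e, (a - e); do 3!split=> //; last by rewrite addrC subrK.
exact: CUNC_abelian.
Qed.

Lemma abelian_CSNC_CUNC : abelian_ring R -> CSNC R -> CUNC R.
Proof.
move=> ab csnc a clean_a; have [e [q [ee [nq [_ ->]]]]] := csnc a clean_a.
exists e; split; first by split => //; rewrite addrC addKr.
move=> f ff nf; have cef : e * f = f * e by apply: ab.
have nef : nilp (e - f).
  have -> : e - f = (e + q - f) + - q by rewrite addrAC addrK.
  apply: nilpD_comm nf (nilpN nq).
  rewrite /GRing.comm mulrN mulNr; congr (- _).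
  by rewrite mulrBl mulrBr mulrDl mulrDr (ab e ee q) (ab f ff q).
apply/esym/subr0_eq/nilp_tripotent_eq0 => //.
exact: idem_sub_tripotent ee ff cef.
Qed.

End CleanRings.

Theorem corollary2p5 (R : unitRingType) : CUNC R <-> (abelian_ring R /\ CSNC R).
Proof.
split=> [cunc | [ab csnc]].
  by split; [apply: CUNC_abelian | apply: CUNC_CSNC].
exact: abelian_CSNC_CUNC.
Qed.
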